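(* $I_n^0$ is a right ideal of $\Omega(B_n)$. Moreover, it is the principal right ideal generated by $X_{\{0\}}$, i.e. $I_n^0=X_{\{0\}}\cdot\Omega(B_n)$.
   Context: Group algebra $\mathbb{Q}B_n$ with product composition $(uv)(i)=u(v(i))$. $B_n$: signed permutations $w=w_1\dots w_n$ (bijections of $\{\pm1,\dots,\pm n\}$ with $w(-i)=-w(i)$), values ordered $\cdots<-2<-1<1<2<\cdots$, $w_0=0$; $\mathrm{Des}(w)=\{i\in\{0,\dots,n-1\}:w_i>w_{i+1}\}$; $X_J=\sum_{\mathrm{Des}(w)\subseteq J}w$; $I_n^0=\mathrm{span}\{X_J: J\subseteq\{0,\dots,n-1\},\,0\in J\}$. A signed composition of $n$ is a sequence $\alpha=(a_1,\dots,a_k)$ of nonzero integers with $|a_1|+\dots+|a_k|=n$. For such $\alpha$, let $T_\alpha$ be the sum of all $w\in B_n$ such that, cutting $[n]$ into successive intervals of lengths $|a_1|,\dots,|a_k|$: on each interval the entries $w_j$ all have sign equal to the sign of the corresponding $a_i$ and $|w_j|$ is increasing, and these intervals are maximal with these two properties. The Mantaci–Reutenauer algebra $\Omega(B_n)$ is $\mathrm{span}\{T_\alpha\}$ over all signed compositions $\alpha$ of $n$; it is a subalgebra of $\mathbb{Q}B_n$ containing $\mathrm{span}\{X_J\}$. *)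

From HB Require Import structures.
From mathcomp Require Import all_boot all_order all_algebra all_fingroup.
Set Implicit Arguments. Unset Strict Implicit. Unset Printing Implicit Defensive.
Import Order.TTheory GRing.Theory Num.Theory.
Local Open Scope ring_scope.

(* Signed values: (true, k) stands for -(k+1), (false, k) for k+1. *)
Definition sval (n : nat) := (bool * 'I_n)%type.
Definition sneg n (x : sval n) : sval n := (~~ x.1, x.2).
Definition sint n (x : sval n) : int :=
  if x.1 then - (x.2.+1)%:Z else (x.2.+1)%:Z.

Definition is_signed n (w : {perm sval n}) : bool :=
  [forall x, w (sneg x) == sneg (w x)].

Definition Bn (n : nat) := {w : {perm sval n} | is_signed w}.

(* u v = w as composition of functions: (uv)(i) = u(v(i)) *)
Definition compeq n (u v w : Bn n) : bool :=
  [forall x, val u (val v x) == val w x].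

Notation QB n := {ffun Bn n -> rat}.
Definition qbmul n (a b : QB n) : QB n :=
  [ffun w => \sum_(u : Bn n) \sum_(v : Bn n) (if compeq u v w then a u * b v else 0)].
Definition basis n (w : Bn n) : QB n := [ffun u => (u == w)%:R].

(* w_k as a signed integer, with w_0 = 0 (k is 1-based; 0 outside range). *)
Definition wv n (w : Bn n) (k : nat) : int :=
  match k with
  | 0 => 0
  | k'.+1 => match insub k' with Some j => sint (val w (false, j)) | None => 0 end
  end.

Definition Des n (w : Bn n) : {set 'I_n} := [set i : 'I_n | wv w i.+1 < wv w i].

Definition XJ n (J : {set 'I_n}) : QB n := \sum_(w | Des w \subset J) basis w.

Definition is_scomp (n : nat) (al : seq int) : bool :=
  all (fun a => a != 0) al && (sumn (map absz al) == n).
Definition psums (al : seq int) : seq nat := scanl addn 0%N (map absz al).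
(* index of the interval containing 0-based position j *)
Definition blk (al : seq int) (j : nat) : nat := count (fun s => s <= j)%N (psums al).
Definition pos_at n (w : Bn n) (j : nat) : bool := 0 < wv w j.+1.
Definition abs_at n (w : Bn n) (j : nat) : nat := absz (wv w j.+1).
Definition incr_at n (w : Bn n) (j : nat) : bool :=
  (pos_at w j == pos_at w j.+1) && (abs_at w j < abs_at w j.+1)%N.
Definition inT n (al : seq int) (w : Bn n) : bool :=
  [forall j : 'I_n, pos_at w j == (0 < nth 0 al (blk al j))] &&
  [forall j : 'I_n, (j.+1 < n)%N ==>
      (if (j.+1 \in psums al) then ~~ incr_at w j else incr_at w j)].
Definition Talpha n (al : seq int) : QB n := \sum_(w | inT al w) basis w.

Definition inspan n (G : QB n -> Prop) (x : QB n) : Prop :=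
  exists s : seq (rat * QB n),
    (forall p, p \in s -> G p.2) /\ x = \sum_(p <- s) [ffun w => p.1 * p.2 w].

Definition Omega n : QB n -> Prop :=
  inspan (fun x => exists al, is_scomp n al /\ x = Talpha n al).

Definition I0 n : QB n.+1 -> Prop :=
  inspan (fun x => exists J : {set 'I_n.+1}, ord0 \in J /\ x = XJ J).

Arguments Omega n x : clear implicits.
Arguments I0 n x : clear implicits.

(* Both spaces are spaces of invariant functions on B_n.  An element lies in
   I_n^0 iff its coefficients depend only on Des(w) \ {0} (inclusion-exclusion
   over the X_J), and in Omega(B_n) iff they depend only on the signs of w and
   on the cut points of its maximal runs, whose fibres are the T_alpha.  As
   Des(w) \ {0} is read off from signs and cuts, I_n^0 is inside Omega(B_n).
   For the ideal property, T_alpha is an alternating sum of the sums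
   Z(t, C) = [desc_sum t C] of all v with signs t and |v| having descents in C.
   The coefficient of w in X_J Z(t, C) counts the permutations s with descents
   in C which, inside each J-segment, sort the values of w with signs flipped
   by t.  Such an s is fixed by the segment it sends each position to, so the
   count depends only on the ascents of w off C, hence only on Des(w) \ {0}
   when t is constant off C.  For X_{0} there is a single segment, which gives
   X_J = X_{0} Z(+, J - 1). *)

From Pilot Require Import Defs.
From HB Require Import structures.
From mathcomp Require Import all_boot all_order all_algebra all_fingroup.
From mathcomp Require Import zify.
Set Implicit Arguments. Unset Strict Implicit. Unset Printing Implicit Defensive.
Import Order.TTheory GRing.Theory Num.Theory.
Local Open Scope ring_scope.

Section Span.
Variable n : nat.
Implicit Types (x y z : QB n) (G H K : QB n -> Prop).

Definition qbscale (c : rat) x : QB n := [ffun w => c * x w].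

Lemma inspan_ind G (P : QB n -> Prop) : P 0 ->
  (forall x y, P x -> P y -> P (x + y)) -> (forall c x, P x -> P (qbscale c x)) ->
  (forall g, G g -> P g) -> forall x, inspan G x -> P x.
Proof.
move=> P0 PD PZ PG x [s [Gs ->]]; elim: s Gs => [|p s IHs] Gs; first by rewrite big_nil.
rewrite big_cons; apply: PD; first by apply: PZ; apply/PG/Gs; rewrite mem_head.
by apply: IHs => q qs; apply: Gs; rewrite in_cons qs orbT.
Qed.

Lemma inspan0 G : inspan G 0.
Proof. by exists [::]; rewrite big_nil. Qed.

Lemma inspanD G x y : inspan G x -> inspan G y -> inspan G (x + y).
Proof.
move=> [s [Gs ->]] [t [Gt ->]]; exists (s ++ t); split; last by rewrite big_cat.
by move=> p; rewrite mem_cat => /orP[]; [exact: Gs | exact: Gt].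
Qed.

Lemma inspanZ G c x : inspan G x -> inspan G (qbscale c x).
Proof.
move=> [s [Gs ->]]; exists [seq (c * p.1, p.2) | p <- s]; split.
  by move=> q /mapP[p ps ->]; exact: (Gs p ps).
apply/ffunP => w; rewrite !ffunE big_map !sum_ffunE big_distrr.
by apply: eq_bigr => p _; rewrite !ffunE /= mulrA.
Qed.

Lemma inspan_gen G g : G g -> inspan G g.
Proof.
move=> Gg; exists [:: (1, g)]; split; first by move=> p; rewrite inE => /eqP->.
by apply/ffunP => w; rewrite big_seq1 ffunE mul1r.
Qed.

Lemma inspan_sum G (I : finType) (P : pred I) (F : I -> QB n) :
  (forall i, P i -> inspan G (F i)) -> inspan G (\sum_(i | P i) F i).
Proof.
move=> GF; elim/big_rec: _ => [|i x Pi Gx]; first exact: inspan0.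
by apply: inspanD => //; apply: GF.
Qed.

Lemma qbmulDl x y z : qbmul (x + y) z = qbmul x z + qbmul y z.
Proof.
apply/ffunP => w; rewrite !ffunE -big_split; apply: eq_bigr => u _.
by rewrite -big_split; apply: eq_bigr => v _; rewrite !ffunE; case: ifP; rewrite ?addr0 ?mulrDl.
Qed.

Lemma qbmulDr x y z : qbmul x (y + z) = qbmul x y + qbmul x z.
Proof.
apply/ffunP => w; rewrite !ffunE -big_split; apply: eq_bigr => u _.
by rewrite -big_split; apply: eq_bigr => v _; rewrite !ffunE; case: ifP; rewrite ?addr0 ?mulrDr.
Qed.

Lemma qbmulZl c x z : qbmul (qbscale c x) z = qbscale c (qbmul x z).
Proof.
apply/ffunP => w; rewrite !ffunE big_distrr; apply: eq_bigr => u _.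
rewrite big_distrr; apply: eq_bigr => v _.
by rewrite !ffunE; case: ifP; rewrite /= ?mulr0 // mulrA.
Qed.

Lemma qbmulZr c x z : qbmul x (qbscale c z) = qbscale c (qbmul x z).
Proof.
apply/ffunP => w; rewrite !ffunE big_distrr; apply: eq_bigr => u _.
rewrite big_distrr; apply: eq_bigr => v _.
by rewrite !ffunE; case: ifP; rewrite /= ?mulr0 // mulrCA.
Qed.

Lemma qbmul0l z : qbmul 0 z = 0.
Proof.
apply/ffunP => w; rewrite !ffunE big1 // => u _.
by rewrite big1 // => v _; rewrite ffunE mul0r; case: ifP.
Qed.

Lemma qbmul0r z : qbmul z 0 = 0.
Proof.
apply/ffunP => w; rewrite !ffunE big1 // => u _.
by rewrite big1 // => v _; rewrite ffunE mulr0; case: ifP.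
Qed.

Lemma qbmul_sumr x (I : finType) (P : pred I) (F : I -> QB n) :
  qbmul x (\sum_(i | P i) F i) = \sum_(i | P i) qbmul x (F i).
Proof. by elim/big_rec2: _ => [|i y1 y2 _ <-]; [exact: qbmul0r | exact: qbmulDr]. Qed.

Lemma inspan_qbmul G H K :
  (forall g h, G g -> H h -> inspan K (qbmul g h)) ->
  forall x y, inspan G x -> inspan H y -> inspan K (qbmul x y).
Proof.
move=> GHK x y Gx; move: x Gx y; apply: inspan_ind.
- by move=> y _; rewrite qbmul0l; exact: inspan0.
- by move=> x1 x2 K1 K2 y Hy; rewrite qbmulDl; apply: inspanD; [apply: K1 | apply: K2].
- by move=> c x Kx y Hy; rewrite qbmulZl; apply/inspanZ/Kx.
move=> g Gg; apply: inspan_ind => [| y1 y2 K1 K2 | c y Ky | h Hh].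
- by rewrite qbmul0r; exact: inspan0.
- by rewrite qbmulDr; exact: inspanD.
- by rewrite qbmulZr; exact: inspanZ.
- exact: GHK.
Qed.

End Span.

Section SignedPerm.
Variable n : nat.
Implicit Types (u v w : Bn n) (s : 'S_n) (t : 'I_n -> bool).

Lemma sint_sneg (x : Defs.sval n) : sint (sneg x) = - sint x.
Proof. by case: x => [[] i]; rewrite /sint /= ?opprK. Qed.

Lemma sint_inj : injective (@sint n).
Proof.
by move=> [[] i] [[] j]; rewrite /sint /= => E; congr (_, _); try apply: val_inj => /=; lia.
Qed.

Definition entry w p : Defs.sval n := val w (false, p).
Definition wval w p : int := sint (entry w p).
Definition negv w p : bool := (entry w p).1.

Lemma wvE w (p : 'I_n) : wv w p.+1 = wval w p.
Proof. by rewrite /wv; case: insubP => [j _ /val_inj -> // |]; rewrite ltn_ord. Qed.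

Lemma signedE w x : val w (sneg x) = sneg (val w x).
Proof. by have /forallP/(_ x)/eqP := valP w. Qed.

Lemma entry_neg w p : val w (true, p) = sneg (entry w p).
Proof. by rewrite -signedE. Qed.

Lemma wval_inj w : injective (wval w).
Proof. by move=> p q /sint_inj /perm_inj []. Qed.

Lemma wval_oppinj w p q : wval w p = - wval w q -> p = q.
Proof.
by rewrite /wval -sint_sneg -entry_neg => /sint_inj /perm_inj.
Qed.

Lemma wvalE w p : wval w p = if negv w p then - ((entry w p).2.+1)%:Z else ((entry w p).2.+1)%:Z.
Proof. by []. Qed.

Lemma entry_abs_inj w p q : (entry w p).2 = (entry w q).2 -> p = q.
Proof.
move=> E; have [Eb | Nb] := eqVneq (negv w p) (negv w q).
  by apply: (@wval_inj w); rewrite !wvalE Eb E.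
apply: (@wval_oppinj w); rewrite !wvalE E; move: Nb; rewrite /negv.
by case: (entry w p).1; case: (entry w q).1; rewrite ?opprK.
Qed.

Definition absperm w : 'S_n := perm (@entry_abs_inj w).

Lemma abspermE w p : absperm w p = (entry w p).2.
Proof. by rewrite permE. Qed.

Lemma mul_signed u v : is_signed ((val v * val u)%g).
Proof. by apply/forallP => x; rewrite !permM !signedE. Qed.
Definition bmul u v : Bn n := exist (@is_signed n) _ (mul_signed u v).

Lemma inv_signed v : is_signed ((val v)^-1%g).
Proof. by apply/forallP => x; apply/eqP/(@perm_inj _ (val v)); rewrite permKV signedE permKV. Qed.
Definition binv v : Bn n := exist (@is_signed n) _ (inv_signed v).

Lemma compeqE u v w : compeq u v w = (u == bmul w (binv v)).
Proof.
apply/forallP/eqP => [uvw | ->]; last by move=> x; rewrite /= !permM permK.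
by apply/val_inj/permP => x /=; rewrite permM -(eqP (uvw _)) permKV.
Qed.

Lemma qbmulE (x y : QB n) w : qbmul x y w = \sum_v x (bmul w (binv v)) * y v.
Proof.
rewrite ffunE exchange_big; apply: eq_bigr => v _.
rewrite (bigD1 (bmul w (binv v))) //= compeqE eqxx big1 ?addr0 // => u.
by rewrite compeqE => /negbTE ->.
Qed.

Definition bfun s t (x : Defs.sval n) : Defs.sval n := (x.1 (+) t x.2, s x.2).

Lemma bfun_inj s t : injective (bfun s t).
Proof. by move=> [b1 p1] [b2 p2] [] /= + /perm_inj E; subst p2 => /addIb ->. Qed.

Lemma bfun_signed s t : is_signed (perm (@bfun_inj s t)).
Proof. by apply/forallP => -[b p]; rewrite !permE /bfun /sneg /= addNb. Qed.

Definition bperm s t : Bn n := exist (@is_signed n) _ (bfun_signed s t).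

Lemma entry_bperm s t p : entry (bperm s t) p = (t p, s p).
Proof. by rewrite /entry /= permE. Qed.

Lemma bperm_abs w : bperm (absperm w) (negv w) = w.
Proof.
apply/val_inj/permP => -[[] p]; rewrite /= permE /bfun /= abspermE /negv //=.
  by rewrite entry_neg /sneg /=.
by rewrite -surjective_pairing.
Qed.

Lemma bperm_ext s t1 t2 : t1 =1 t2 -> bperm s t1 = bperm s t2.
Proof. by move=> E; apply/val_inj/permP => x /=; rewrite !permE /bfun E. Qed.

Lemma bperm_inj t : injective (bperm ^~ t).
Proof.
move=> s1 s2 E; apply/permP => p.
by have := entry_bperm s1 t p; rewrite E entry_bperm => -[].
Qed.

Lemma absperm_bperm s t : absperm (bperm s t) = s.
Proof. by apply/permP => p; rewrite abspermE entry_bperm. Qed.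

Lemma negv_bperm s t : negv (bperm s t) =1 t.
Proof. by move=> p; rewrite /negv entry_bperm. Qed.

Definition twist t w p : int := if t p then - wval w p else wval w p.

Lemma twist_inj t w : injective (twist t w).
Proof.
move=> p q; rewrite /twist; case: (t p); case: (t q) => E.
- exact/(wval_inj (w := w))/oppr_inj.
- by apply: (wval_oppinj (w := w)); rewrite -E opprK.
- exact: wval_oppinj E.
- exact: wval_inj E.
Qed.

Lemma wval_mul_binv w s t q : wval (bmul w (binv (bperm s t))) q = twist t w ((s^-1)%g q).
Proof.
have sK : ((val (bperm s t))^-1)%g (false, q) = (t ((s^-1)%g q), (s^-1)%g q).
  by apply: (@perm_inj _ (val (bperm s t))); rewrite permKV /= permE /bfun /= addbb permKV.
rewrite /wval /entry /= permM sK /twist; case: (t _) => //.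
by rewrite entry_neg sint_sneg.
Qed.

Lemma sum_basisE (P : pred (Bn n)) u : (\sum_(w | P w) basis w) u = (P u)%:R.
Proof.
rewrite sum_ffunE; under eq_bigr do rewrite ffunE.
have [Pu | nPu] := boolP (P u).
  by rewrite (bigD1 u) //= eqxx big1 ?addr0 // => w /andP[_ /negbTE]; rewrite eq_sym => ->.
by rewrite big1 // => w Pw; case: eqP => // E; move: Pw; rewrite -E (negbTE nPu).
Qed.

End SignedPerm.

Lemma inspan_fibers n (G : QB n -> Prop) (K : finType) (f : Bn n -> K) :
  (forall w0, inspan G (\sum_(w | f w == f w0) basis w)) ->
  forall x : QB n, (forall w1 w2, f w1 = f w2 -> x w1 = x w2) -> inspan G x.
Proof.
move=> Gfib x xf; pose c k := if [pick w | f w == k] is Some w0 then x w0 else 0.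
have -> : x = \sum_k qbscale (c k) (\sum_(w | f w == k) basis w).
  apply/ffunP => w; rewrite sum_ffunE.
  under eq_bigr do rewrite ffunE sum_basisE.
  rewrite (bigD1 (f w)) //= eqxx mulr1 big1 ?addr0 => [|k /negbTE]; last first.
    by rewrite eq_sym => ->; rewrite mulr0.
  by rewrite /c; case: pickP => [w0 /eqP /xf // | /(_ w)]; rewrite eqxx.
apply: inspan_sum => k _; apply: inspanZ.
case: (pickP (fun w => f w == k)) => [w0 /eqP <- // | noK].
by rewrite big_pred0 //; exact: inspan0.
Qed.

Section InclusionExclusion.
Variable T : finType.

Lemma sum_subsets_sign (C : {set T}) :
  \sum_(S : {set T} | S \subset C) ((-1) ^+ #|S| : rat) = (C == set0)%:R.
Proof.
have [-> | /set0Pn [x xC]] := eqVneq C set0.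
  by rewrite (big_pred1 set0) ?cards0 // => S; rewrite /= subset0.
pose h (S : {set T}) : {set T} := if x \in S then S :\ x else x |: S.
have hK : involutive h.
  by move=> S; rewrite /h; have [xS | xS] := boolP (x \in S);
    rewrite ?setD11 ?setD1K ?setU11 ?setU1K.
have hC (S : {set T}) : (h S \subset C) = (S \subset C).
  rewrite /h; case: ifP => xS; last by rewrite subUset sub1set xC.
  by rewrite -{2}(setD1K xS) subUset sub1set xC.
have hsign (S : {set T}) : (-1) ^+ #|h S| = - (-1) ^+ #|S| :> rat.
  rewrite /h; case: ifP => xS; last by rewrite cardsU1 xS exprS mulN1r.
  by rewrite [in RHS](cardsD1 x S) xS exprS mulN1r opprK.
set s := \sum_(S | _) _; have : s = - s.
  rewrite {1}/s (reindex_inj (inv_inj hK)) /= -sumrN.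
  by apply: eq_big => S; [exact: hC | rewrite hsign].
by move/eqP; rewrite -addr_eq0 -mulr2n mulrn_eq0 /= => /eqP->.
Qed.

Lemma sum_subsets_disjoint (A D : {set T}) :
  \sum_(S : {set T} | S \subset A) ((-1) ^+ #|S| * ([disjoint S & D])%:R : rat)
  = (A \subset D)%:R.
Proof.
rewrite -setD_eq0 -sum_subsets_sign big_mkcond [RHS]big_mkcond /=.
apply: eq_bigr => S _; rewrite subsetD.
by case: (S \subset A); case: [disjoint S & D]; rewrite ?mulr1 ?mulr0.
Qed.

End InclusionExclusion.

Lemma XJE n (J : {set 'I_n}) w : XJ J w = (Des w \subset J)%:R.
Proof. exact: sum_basisE. Qed.

Section I0Invariant.
Variable n : nat.
Local Notation Des0 w := (Des w :\ (ord0 : 'I_n.+1)).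

Lemma I0_XJ (J : {set 'I_n.+1}) : ord0 \in J -> I0 n (XJ J).
Proof. by move=> J0; apply: inspan_gen; exists J. Qed.

Lemma I0_Des0_fiber (K : {set 'I_n.+1}) : I0 n (\sum_(w | Des0 w == K) basis w).
Proof.
have -> : \sum_(w | Des0 w == K) basis w =
    \sum_(S : {set 'I_n.+1} | S \subset K) qbscale ((-1) ^+ #|S|) (XJ (ord0 |: (K :\: S))).
  apply/ffunP => w; rewrite sum_basisE sum_ffunE.
  under eq_bigr do rewrite ffunE XJE -subDset subsetD.
  have [DK | nDK] := boolP (Des0 w \subset K); last first.
    by rewrite eqEsubset (negbTE nDK) big1 // => S _; rewrite mulr0.
  rewrite eqEsubset DK -(sum_subsets_disjoint K (Des0 w)).
  by apply: eq_bigr => S _; rewrite disjoint_sym.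
apply: inspan_sum => S _; apply/inspanZ/I0_XJ.
by rewrite setU11.
Qed.

Lemma I0_invariantP (x : QB n.+1) :
  I0 n x <-> (forall w1 w2, Des0 w1 = Des0 w2 -> x w1 = x w2).
Proof.
split=> [|inv]; last by apply: inspan_fibers inv => w0; exact: I0_Des0_fiber.
move: x; apply: inspan_ind
  => [w1 w2 _ | x1 x2 inv1 inv2 w1 w2 E | c x1 inv1 w1 w2 E | _ [J [J0 ->]] w1 w2 E].
- by rewrite !ffunE.
- by rewrite !ffunE (inv1 _ _ E) (inv2 _ _ E).
- by rewrite !ffunE (inv1 _ _ E).
have DJ w : (Des w \subset J) = (Des0 w \subset J) by rewrite subDset (setUidPr _) ?sub1set.
by rewrite !XJE !DJ E.
Qed.

End I0Invariant.

Section RankPerm.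
Local Open Scope nat_scope.
Variables (n : nat) (lt : rel 'I_n).
Hypothesis ltI : irreflexive lt.
Hypothesis ltT : transitive lt.
Hypothesis ltC : forall p q, p != q -> lt p q || lt q p.

Definition rnk p := #|[set p' | lt p' p]|.

Lemma rnk_lt p q : lt p q -> rnk p < rnk q.
Proof.
move=> pq; apply/proper_card/properP; split.
  by apply/subsetP => x; rewrite !inE => /ltT; apply.
by exists p; rewrite !inE ?pq ?ltI.
Qed.

Lemma rnk_ltE p q : (rnk p < rnk q) = lt p q.
Proof.
apply/idP/idP => [|/rnk_lt //]; have [-> | /ltC/orP[] //] := eqVneq p q; first by rewrite ltnn.
by move=> /rnk_lt qp pq; have := ltn_trans pq qp; rewrite ltnn.
Qed.

Lemma rnk_inj : injective rnk.
Proof. by move=> p q E; apply/eqP/negPn/negP => /ltC/orP[] /rnk_lt; rewrite E ltnn. Qed.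

Lemma rnk_bound p : rnk p < n.
Proof.
rewrite -[n]card_ord -cardsT; apply/proper_card/properP; split; first exact: subsetT.
by exists p; rewrite ?inE ?ltI.
Qed.

Lemma rnk_down (D : {set 'I_n}) : (forall p q, lt q p -> p \in D -> q \in D) ->
  forall p, (rnk p < #|D|) = (p \in D).
Proof.
move=> Ddown p; apply/idP/idP => [|pD]; last first.
  apply/proper_card/properP; split; first by apply/subsetP => x; rewrite inE => /Ddown; apply.
  by exists p; rewrite ?inE ?ltI.
apply: contraTT => pD; rewrite -leqNgt; apply/subset_leq_card/subsetP => x xD; rewrite inE.
have [xp | /ltC/orP[] // /Ddown/(_ xD)] := eqVneq x p; first by rewrite -xp xD in pD.
by rewrite (negbTE pD).
Qed.

Definition rank_ord p : 'I_n := Ordinal (rnk_bound p).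

Lemma rank_ord_inj : injective rank_ord.
Proof. by move=> p q [/rnk_inj]. Qed.

Definition rank_perm : 'S_n := perm rank_ord_inj.

Lemma rank_permE p : rank_perm p = rnk p :> nat.
Proof. by rewrite permE. Qed.

Lemma rank_perm_ltE p q : (rank_perm p < rank_perm q) = lt p q.
Proof. by rewrite !rank_permE rnk_ltE. Qed.

End RankPerm.

Lemma card_ord_lt n (q : 'I_n) : #|[set q' : 'I_n | (q' < q)%N]| = q.
Proof.
have winj : injective (widen_ord (ltnW (ltn_ord q))) by move=> x y /(congr1 val) /= /val_inj.
rewrite -[RHS]card_ord -(card_imset _ winj).
apply: eq_card => x; rewrite inE; apply/idP/imsetP => [xq | [y _ ->]]; last exact: ltn_ord y.
by exists (Ordinal xq) => //; exact: val_inj.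
Qed.

Lemma card_perm_lt n (s : 'S_n) (p : 'I_n) : #|[set p' | (s p' < s p)%N]| = s p.
Proof.
rewrite -[X in _ = X]card_ord_lt -[X in _ = X](card_preimset _ (@perm_inj _ s)).
by apply: eq_card => x; rewrite !inE.
Qed.

Lemma ord_down n (D : {set 'I_n}) : (forall p q : 'I_n, (q < p)%N -> p \in D -> q \in D) ->
  forall q : 'I_n, (q < #|D|)%N = (q \in D).
Proof.
move=> Ddown q; have ltC (p r : 'I_n) : p != r -> (p < r)%N || (r < p)%N.
  by rewrite -val_eqE neq_ltn.
have := @rnk_down n (fun x y => (x < y)%N) (fun p => ltnn p) ltC D Ddown q.
by rewrite /rnk card_ord_lt.
Qed.

Section Shuffles.
Local Open Scope nat_scope.
Variables (n : nat) (seg : 'I_n -> nat) (C : {set 'I_n}).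
Hypothesis seg_mono : {homo seg : q r / q <= r}.

Definition lexo (g : 'I_n -> nat) (b : 'I_n -> int) : rel 'I_n :=
  fun p q => (g p < g q) || ((g p == g q) && (b p < b q)%R).

Section Lexo.
Variables (g : 'I_n -> nat) (b : 'I_n -> int).
Hypothesis b_inj : injective b.

Lemma lexo_irr : irreflexive (lexo g b).
Proof. by move=> p; rewrite /lexo ltnn eqxx ltxx. Qed.

Lemma lexo_trans : transitive (lexo g b).
Proof.
move=> q p r; rewrite /lexo => /orP[pq | /andP[/eqP-> pq]] /orP[qr | /andP[/eqP<- qr]].
- by rewrite (ltn_trans pq qr).
- by rewrite pq.
- by rewrite qr.
- by rewrite eqxx (lt_trans pq qr) orbT.
Qed.

Lemma lexo_total p q : p != q -> lexo g b p q || lexo g b q p.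
Proof.
move=> pq; rewrite /lexo; case: ltngtP => //= _.
by case: ltgtP => // /b_inj E; rewrite E eqxx in pq.
Qed.

Lemma lexo_le p q : lexo g b p q -> g p <= g q.
Proof. by case/orP => [/ltnW | /andP[/eqP-> _]]. Qed.

Definition lexrank : 'S_n := rank_perm lexo_irr lexo_trans lexo_total.

Lemma lexrankE p : lexrank p = rnk (lexo g b) p :> nat.
Proof. exact: rank_permE. Qed.

Lemma lexrank_ltE p q : (lexrank p < lexrank q) = lexo g b p q.
Proof. exact: rank_perm_ltE. Qed.

End Lexo.

Lemma lexrank_ext g1 g2 b (b_inj : injective b) :
  lexo g1 b =2 lexo g2 b -> lexrank g1 b_inj = lexrank g2 b_inj.
Proof.
move=> E; apply/permP => p; apply: ord_inj; rewrite !lexrankE.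
by apply: eq_card => x; rewrite !inE E.
Qed.

Definition desc_in (s : 'S_n) := [forall p : 'I_n, forall p' : 'I_n,
  ((p' == p.+1 :> nat) && (p \notin C)) ==> (s p < s p')].

Definition seg_sorted (a : 'I_n -> int) (s : 'S_n) := [forall q : 'I_n, forall r : 'I_n,
  ((q < r) && (seg q == seg r)) ==> (a ((s^-1)%g q) < a ((s^-1)%g r))%R].

Definition shuffles (a : 'I_n -> int) := [set s : 'S_n | desc_in s && seg_sorted a s].

Lemma seg_sortedP a s (q r : 'I_n) : seg_sorted a s -> q < r -> seg q = seg r ->
  (a ((s^-1)%g q) < a ((s^-1)%g r))%R.
Proof.
move=> /forallP/(_ q)/forallP/(_ r)/implyP sorted qr sqr.
by apply: sorted; rewrite qr sqr eqxx.
Qed.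

Lemma seg_sorted_ltE a s : injective a -> seg_sorted a s ->
  forall p q, (s p < s q) = lexo (seg \o s) a p q.
Proof.
move=> a_inj sorted p q; rewrite /lexo /=; apply/idP/idP => [lt_pq | ].
  have := seg_mono (ltnW lt_pq); rewrite leq_eqVlt => /orP[/eqP E | -> //].
  by have := seg_sortedP sorted lt_pq E; rewrite !permK => ->; rewrite E eqxx orbT.
case/orP => [lt_pq | /andP[/eqP E lt_pq]].
  by rewrite ltnNge; apply/negP => /seg_mono; rewrite leqNgt lt_pq.
case: (ltngtP (s p) (s q)) => // [gt_pq | /val_inj/perm_inj pq].
  by have := seg_sortedP sorted gt_pq (esym E); rewrite !permK => /(lt_trans lt_pq); rewrite ltxx.
by rewrite pq ltxx in lt_pq.
Qed.

(* A shuffle [s] of [a] is determined by [seg \o s], the order inside a segment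
   being dictated by [a]; ranking [seg \o s] by [b] instead yields a shuffle of [b]. *)
Section Transfer.
Variables (a b : 'I_n -> int) (a_inj : injective a) (b_inj : injective b).

Lemma lexrank_shuffle s : s \in shuffles a -> lexrank (seg \o s) a_inj = s.
Proof.
rewrite inE => /andP[_ sorted]; apply/permP => p; apply: ord_inj; rewrite lexrankE.
rewrite -[RHS]card_perm_lt; apply: eq_card => x; rewrite !inE.
by rewrite (seg_sorted_ltE a_inj sorted).
Qed.

Lemma seg_lexrank (s : 'S_n) p : seg (lexrank (seg \o s) b_inj p) = seg (s p).
Proof.
set F := lexrank (seg \o s) b_inj.
suff seg_lt j : (seg (F p) < j) = (seg (s p) < j).
  by apply/eqP; rewrite eqn_leq -ltnS seg_lt ltnS leqnn -ltnS -seg_lt ltnS leqnn.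
set D := [set q : 'I_n | seg q < j].
have D_down : forall q : 'I_n, (q < #|D|) = (q \in D).
  by apply: ord_down => x y yx; rewrite !inE; apply/leq_ltn_trans/seg_mono/ltnW.
have card_D : #|D| = #|[set x | seg (s x) < j]|.
  by rewrite -[LHS](card_preimset _ (@perm_inj _ s)); apply: eq_card => x; rewrite !inE.
have -> : (seg (F p) < j) = (F p \in D) by rewrite inE.
rewrite -D_down card_D lexrankE.
rewrite (rnk_down (@lexo_irr _ _) (lexo_total _ b_inj)) ?inE // => x y /lexo_le xy.
by rewrite !inE; exact: leq_ltn_trans.
Qed.

Hypothesis same_ascents : forall p p' : 'I_n, p' = p.+1 :> nat -> p \notin C ->
  (a p < a p')%R = (b p < b p')%R.

Lemma lexrank_shuffles s : s \in shuffles a -> lexrank (seg \o s) b_inj \in shuffles b.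
Proof.
move=> sa; have := sa; rewrite !inE => /andP[desc sorted]; apply/andP; split.
  apply/forallP => p; apply/forallP => p'; apply/implyP => /andP[/eqP Ep' pC].
  move/forallP/(_ p)/forallP/(_ p')/implyP: desc; rewrite Ep' eqxx pC => /(_ isT).
  rewrite (seg_sorted_ltE a_inj sorted) lexrank_ltE /lexo /= => /orP[-> // | /andP[-> lt_a]].
  by rewrite -(same_ascents Ep' pC) lt_a orbT.
apply/forallP => q; apply/forallP => r; apply/implyP => /andP[qr /eqP sqr].
set F := lexrank (seg \o s) b_inj.
have : F ((F^-1)%g q) < F ((F^-1)%g r) by rewrite !permKV.
by rewrite lexrank_ltE /lexo /= -!(seg_lexrank s) !permKV sqr ltnn eqxx.
Qed.

Lemma lexrank_inj : {in shuffles a &, injective (fun s : 'S_n => lexrank (seg \o s) b_inj)}.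
Proof.
move=> s1 s2 sa1 sa2 /= E; rewrite -(lexrank_shuffle sa1) -(lexrank_shuffle sa2).
have seg12 p : seg (s1 p) = seg (s2 p) by rewrite -(seg_lexrank s1) -(seg_lexrank s2) E.
by apply: lexrank_ext => p q; rewrite /lexo /= !seg12.
Qed.

Lemma card_shuffles_le : #|shuffles a| <= #|shuffles b|.
Proof.
rewrite -(card_in_imset lexrank_inj); apply/subset_leq_card/subsetP => _ /imsetP[s sa ->].
exact: lexrank_shuffles.
Qed.

End Transfer.

Lemma card_shuffles a b (a_inj : injective a) (b_inj : injective b) :
  (forall p p' : 'I_n, p' = p.+1 :> nat -> p \notin C -> (a p < a p')%R = (b p < b p')%R) ->
  #|shuffles a| = #|shuffles b|.
Proof.
move=> E; apply/eqP; rewrite eqn_leq (card_shuffles_le a_inj b_inj E).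
by rewrite (card_shuffles_le b_inj a_inj) // => p p' Ep pC; rewrite E.
Qed.

Lemma card_shuffles_flat a (a_inj : injective a) : (forall q r, seg q = seg r) ->
  #|shuffles a| = [forall p : 'I_n, forall p' : 'I_n,
      ((p' == p.+1 :> nat) && (p \notin C)) ==> (a p < a p')%R].
Proof.
move=> seg_const; set rho := lexrank (fun _ => 0) a_inj.
have rhoE p q : (rho p < rho q) = (a p < a q)%R by rewrite lexrank_ltE /lexo ltnn eqxx.
have sub_rho : shuffles a \subset [set rho].
  apply/subsetP => s sa; rewrite inE -(lexrank_shuffle a_inj sa); apply/eqP/lexrank_ext => p q.
  by rewrite /lexo /= (seg_const (s p) (s q)) ltnn eqxx.
have rho_sorted : seg_sorted a rho.
  by apply/forallP => q; apply/forallP => r; apply/implyP => /andP[qr _]; rewrite -rhoE !permKV.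
set asc := [forall p : 'I_n, _].
have rho_a : (rho \in shuffles a) = asc.
  rewrite inE rho_sorted andbT; apply: eq_forallb => p; apply: eq_forallb => p'.
  by rewrite rhoE.
case: asc rho_a => rho_a.
  rewrite (_ : shuffles a = [set rho]) ?cards1 //.
  by apply/eqP; rewrite eqEsubset sub_rho sub1set rho_a.
rewrite (_ : shuffles a = set0) ?cards0 //; apply/setP => s; rewrite in_set0.
apply/negbTE/negP => sa; move/subsetP/(_ s sa): sub_rho; rewrite inE => /eqP Es.
by rewrite -Es sa in rho_a.
Qed.

End Shuffles.

Lemma exists_succ n (P : pred 'I_n) (p p' : 'I_n) : p' = p.+1 :> nat ->
  [exists k : 'I_n, (k == p.+1 :> nat) && P k] = P p'.
Proof.
move=> Ep'; apply/existsP/idP => [[k /andP[/eqP Ek]] | Pp']; last by exists p'; rewrite Ep' eqxx.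
by rewrite (_ : k = p') //; apply: val_inj; rewrite /= Ek Ep'.
Qed.

Definition perm_des n (s : 'S_n) : {set 'I_n} :=
  [set p : 'I_n | [exists p' : 'I_n, (p' == p.+1 :> nat) && (s p' < s p)%N]].

Lemma mem_perm_des n (s : 'S_n) (p p' : 'I_n) :
  p' = p.+1 :> nat -> (p \in perm_des s) = (s p' < s p)%N.
Proof. by move=> Ep'; rewrite inE (exists_succ (fun k => s k < s p)%N Ep'). Qed.

Lemma desc_inE n (C : {set 'I_n}) s : desc_in C s = (perm_des s \subset C).
Proof.
apply/forallP/subsetP => [asc p | desC p].
  rewrite inE => /existsP[p' /andP[/eqP Ep' lt_p'p]]; apply: contraTT lt_p'p => pC.
  by move/forallP/(_ p')/implyP: (asc p); rewrite Ep' eqxx pC -leqNgt => /(_ isT)/ltnW.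
apply/forallP => p'; apply/implyP => /andP[/eqP Ep' pC].
have : p \notin perm_des s by apply: contra pC; exact: desC.
rewrite inE negb_exists => /forallP/(_ p'); rewrite Ep' eqxx /= -leqNgt leq_eqVlt.
by case/orP => // /eqP/val_inj/perm_inj E; move: Ep'; rewrite E; lia.
Qed.

Section Segments.
Variables (n : nat) (J : {set 'I_n}).

Definition segJ (q : 'I_n) : nat := #|[set i in J | (0 < i <= q)%N]|.

Lemma segJ_mono : {homo segJ : q r / (q <= r)%N}.
Proof.
move=> q r qr; apply/subset_leq_card/subsetP => i; rewrite !inE.
by case/and3P=> -> -> /leq_trans ->.
Qed.

Lemma segJS (q q' : 'I_n) : q' = q.+1 :> nat -> segJ q' = (segJ q + (q' \in J))%N.
Proof.
move=> Eq'; rewrite /segJ.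
have le_q' (i : 'I_n) : i != q' -> (i <= q')%N = (i <= q)%N.
  by rewrite Eq' leq_eqVlt ltnS -Eq' val_eqE => /negbTE->.
have [q'J | q'J] := boolP (q' \in J).
  have -> : [set i in J | (0 < i <= q')%N] = q' |: [set i in J | (0 < i <= q)%N].
    apply/setP => i; rewrite !inE; have [-> | ne] := eqVneq i q'; last by rewrite le_q'.
    by rewrite q'J Eq' ltnSn.
  by rewrite cardsU1 inE Eq' ltnn !andbF addnC.
rewrite addn0; apply: eq_card => i; rewrite !inE.
have [-> | ne] := eqVneq i q'; last by rewrite le_q'.
by rewrite (negbTE q'J).
Qed.

Lemma ascents_segE (A : 'I_n -> int) :
  (forall q q' : 'I_n, q' = q.+1 :> nat -> q' \notin J -> A q < A q') <->
  (forall q r : 'I_n, (q < r)%N -> segJ q = segJ r -> A q < A r).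
Proof.
split=> [asc | inc q q' Eq' q'J]; last first.
  by apply: inc; rewrite ?Eq' // (segJS Eq') (negbTE q'J) addn0.
have step (q r : 'I_n) : r = q.+1 :> nat -> segJ q = segJ r -> A q < A r.
  move=> Er; rewrite (segJS Er) => /eqP.
  by rewrite -{1}[segJ q]addn0 eqn_add2l eq_sym eqb0; exact: asc.
suff far d (q r : 'I_n) : r = (q + d.+1)%N :> nat -> segJ q = segJ r -> A q < A r.
  by move=> q r qr; apply: (far (r - q.+1)%N); lia.
elim: d q r => [|d IHd] q r Er sqr; first by apply: step => //; rewrite Er addn1.
have q1n : (q.+1 < n)%N by have := ltn_ord r; lia.
pose q1 : 'I_n := Ordinal q1n.
have sq1 : segJ q = segJ q1.
  apply/eqP; rewrite eqn_leq segJ_mono ?leqnSn //= sqr segJ_mono //=; lia.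
apply: (lt_trans (step q q1 erefl sq1)); apply: IHd; first by rewrite /=; lia.
by rewrite -sq1.
Qed.

End Segments.

Definition changes n (t : 'I_n -> bool) : {set 'I_n} :=
  [set p : 'I_n | [exists p' : 'I_n, (p' == p.+1 :> nat) && (t p != t p')]].

Lemma mem_changes n (t : 'I_n -> bool) (p p' : 'I_n) :
  p' = p.+1 :> nat -> (p \in changes t) = (t p != t p').
Proof. by move=> Ep'; rewrite inE (exists_succ (fun k => t p != t k) Ep'). Qed.

Lemma changesPn n (t : 'I_n -> bool) (p p' : 'I_n) :
  p' = p.+1 :> nat -> p \notin changes t -> t p = t p'.
Proof. by move=> Ep'; rewrite (mem_changes _ Ep') negbK => /eqP. Qed.

Definition desc_sum n (t : 'I_n -> bool) (C : {set 'I_n}) : QB n :=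
  \sum_(v | [forall p, negv v p == t p] && desc_in C (absperm v)) basis v.

Lemma sum_natr_bool (T : finType) (P : pred T) : \sum_(x : T) ((P x)%:R : rat) = #|P|%:R.
Proof.
rewrite (eq_bigr (fun x => if P x then 1 else 0)) => [|x _]; last by case: (P x).
by rewrite -big_mkcond sumr_const.
Qed.

Section Product.
Variable n : nat.
Local Notation N := n.+1.
Implicit Types (u v w : Bn N) (J C : {set 'I_N}) (t : 'I_N -> bool).

Lemma ord_predP (i : 'I_N) : i != ord0 -> {q : 'I_N | i = q.+1 :> nat}.
Proof.
rewrite -val_eqE /= => i0; exists (Ordinal (leq_ltn_trans (leq_pred i) (ltn_ord i))).
by rewrite /= prednK // lt0n.
Qed.

Lemma mem_Des w (q q' : 'I_N) : q' = q.+1 :> nat -> (q' \in Des w) = (wval w q' < wval w q).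
Proof. by move=> Eq'; rewrite inE wvE Eq' wvE. Qed.

Lemma Des_subsetP u J : ord0 \in J -> reflect
  (forall q q' : 'I_N, q' = q.+1 :> nat -> q' \notin J -> wval u q < wval u q')
  (Des u \subset J).
Proof.
move=> J0; apply: (iffP subsetP) => [DJ q q' Eq' q'J | asc i iD].
  have : q' \notin Des u by apply: contra q'J; exact: DJ.
  rewrite (mem_Des _ Eq') -leNgt le_eqVlt => /orP[/eqP/wval_inj E | //].
  by move: Eq'; rewrite E; lia.
have [-> // | /ord_predP[q Eq]] := eqVneq i ord0; apply: contraT => iJ.
by have := asc q i Eq iJ; rewrite ltNge le_eqVlt -(mem_Des _ Eq) iD orbT.
Qed.

Lemma Des_mul_binv u s t J : ord0 \in J ->
  (Des (bmul u (binv (bperm s t))) \subset J) = seg_sorted (segJ J) (twist t u) s.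
Proof.
move=> J0; apply/(Des_subsetP _ J0)/idP => [asc | sorted].
  apply/forallP => q; apply/forallP => r; apply/implyP => /andP[qr /eqP sqr].
  by rewrite -!wval_mul_binv; apply: (ascents_segE J _).1 qr sqr.
apply/(ascents_segE J _).2 => q r qr sqr; rewrite !wval_mul_binv.
exact: seg_sortedP sorted qr sqr.
Qed.

Lemma qbmul_XJ_desc_sum J t C w : ord0 \in J ->
  qbmul (XJ J) (desc_sum t C) w = #|shuffles (segJ J) C (twist t w)|%:R.
Proof.
move=> J0; rewrite qbmulE.
under eq_bigr => v _ do rewrite XJE sum_basisE -natrM mulnb andbC.
rewrite sum_natr_bool -(card_imset _ (@bperm_inj _ t)); congr _%:R; apply: eq_card => v.
rewrite unfold_in /=; apply/idP/imsetP => [/andP[/andP[/forallP sgn desc] D] | [s sh ->]].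
  have Ev : v = bperm (absperm v) t.
    by rewrite -{1}(bperm_abs v); apply: bperm_ext => p; apply/eqP.
  by exists (absperm v) => //; rewrite inE desc -(Des_mul_binv _ _ _ J0) -Ev.
move: sh; rewrite inE => /andP[desc sorted].
rewrite absperm_bperm desc (Des_mul_binv _ _ _ J0) sorted !andbT.
by apply/forallP => p; rewrite negv_bperm.
Qed.

Lemma twist_ltE t w (p p' : 'I_N) : p' = p.+1 :> nat -> t p = t p' ->
  (twist t w p < twist t w p') = (t p == (p' \in Des w)).
Proof.
move=> Ep' tpp'; rewrite (mem_Des _ Ep') /twist -tpp'.
case: (t p); first by rewrite ltrN2.
rewrite eq_sym eqbF_neg -leNgt le_eqVlt; case: eqP => // /wval_inj E.
by move: Ep'; rewrite E; lia.
Qed.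

Lemma I0_qbmul_XJ_desc_sum J t C : ord0 \in J -> changes t \subset C ->
  I0 n (qbmul (XJ J) (desc_sum t C)).
Proof.
move=> J0 tC; apply/I0_invariantP => w1 w2 D12; rewrite !qbmul_XJ_desc_sum //.
congr _%:R; apply: card_shuffles; [exact: segJ_mono | exact: twist_inj | exact: twist_inj |].
move=> p p' Ep' pC; have tpp' := changesPn Ep' (contra (subsetP tC p) pC).
rewrite !twist_ltE //; congr (_ == _).
have p'0 : p' != ord0 by rewrite -val_eqE /= Ep'.
by move/setP/(_ p'): D12; rewrite !in_setD1 p'0.
Qed.

End Product.

Section Classes.
Variable n : nat.
Implicit Types (w : Bn n) (al : seq int) (t : {ffun 'I_n -> bool}) (B : {set 'I_n}).

Definition signs w : {ffun 'I_n -> bool} := [ffun p => negv w p].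

(* The positions where the maximal runs of [w] in the definition of [T_alpha] end. *)
Definition run_cuts w : {set 'I_n} := [set j : 'I_n | (j.+1 < n)%N && ~~ incr_at w j].

Definition run_class t B : QB n := \sum_(w | (signs w == t) && (run_cuts w == B)) basis w.

Lemma pos_atE w (j : 'I_n) : pos_at w j = ~~ negv w j.
Proof. by rewrite /pos_at wvE wvalE; case: negv. Qed.

Lemma abs_atE w (j : 'I_n) : abs_at w j = (absperm w j).+1.
Proof. by rewrite /abs_at wvE wvalE abspermE; case: negv; rewrite ?abszN. Qed.

Lemma incr_atE w (j j' : 'I_n) : j' = j.+1 :> nat ->
  incr_at w j = (negv w j == negv w j') && (absperm w j < absperm w j')%N.
Proof.
by move=> Ej'; rewrite /incr_at -Ej' !pos_atE !abs_atE ltnS; case: negv; case: negv.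
Qed.

Lemma run_cutsE w : run_cuts w = changes (signs w) :|: perm_des (absperm w).
Proof.
apply/setP => j; rewrite inE in_setU; case: (ltnP j.+1 n) => [jn | nj] /=; last first.
  by rewrite !inE; apply/esym/norP; split; apply/negP => /existsP[j' /andP[/eqP Ej' _]];
    move: (ltn_ord j'); rewrite Ej' ltnNge nj.
pose j' := Ordinal jn; have Ej' : j' = j.+1 :> nat by [].
rewrite (mem_changes _ Ej') (mem_perm_des _ Ej') (incr_atE _ Ej') !ffunE negb_and -leqNgt leq_eqVlt.
have [/ord_inj/perm_inj E | _] := eqVneq (absperm w j' : nat) (absperm w j); last by [].
by move: Ej'; rewrite E; lia.
Qed.

Definition comp_signs al : {ffun 'I_n -> bool} := [ffun p : 'I_n => ~~ (0 < nth 0 al (blk al p))].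
Definition comp_cuts al : {set 'I_n} := [set p : 'I_n | (p.+1 < n)%N && (p.+1 \in psums al)].

Lemma Talpha_run_class al : Talpha n al = run_class (comp_signs al) (comp_cuts al).
Proof.
apply/ffunP => w; rewrite !sum_basisE; congr _%:R; rewrite /inT; congr (_ && _).
  apply/forallP/eqP => [sgn | /ffunP E j].
    by apply/ffunP => j; rewrite !ffunE; move/eqP: (sgn j); rewrite pos_atE => <-; rewrite negbK.
  by move: (E j); rewrite !ffunE pos_atE => ->; rewrite negbK.
apply/forallP/eqP => [runs | /setP E j]; last first.
  by apply/implyP => jn; move: (E j); rewrite !inE jn; case: (_ \in psums al); case: incr_at.
apply/setP => j; rewrite !inE; case: (ltnP j.+1 n) => //= jn.
by move/implyP/(_ jn): (runs j); case: (_ \in psums al) => ->; rewrite ?negbK.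
Qed.

Lemma desc_sumE t C w : desc_sum t C w = ((signs w == t) && (perm_des (absperm w) \subset C))%:R.
Proof.
rewrite sum_basisE desc_inE; congr ((_ && _)%:R); apply/forallP/eqP => [sgn | <- p].
  by apply/ffunP => p; rewrite ffunE; apply/eqP.
by rewrite ffunE.
Qed.

Lemma run_class_decomp t B : changes t \subset B ->
  run_class t B = \sum_(S : {set 'I_n} | S \subset B :\: changes t)
                qbscale ((-1) ^+ #|S|) (desc_sum t (B :\: S)).
Proof.
move=> tB; apply/ffunP => w; rewrite /run_class sum_basisE sum_ffunE.
under eq_bigr do rewrite ffunE desc_sumE subsetD.
have [sgn | _] := eqVneq (signs w) t; last by rewrite big1 // => S _; rewrite mulr0.
have [DB | nDB] := boolP (perm_des (absperm w) \subset B); last first.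
  rewrite big1 => [|S _]; last by rewrite mulr0.
  by rewrite run_cutsE sgn eqEsubset subUset (negbTE nDB) andbF.
under [RHS]eq_bigr do rewrite /= disjoint_sym.
by rewrite sum_subsets_disjoint run_cutsE sgn eqEsubset subUset tB DB -subDset.
Qed.

End Classes.

Section SeqCount.
Local Open Scope nat_scope.

Lemma iota0S m : iota 0 m.+1 = iota 0 m ++ [:: m].
Proof. by rewrite -addn1 iotaD. Qed.

Lemma count_iota_prefix (P : pred nat) m : (forall j, P j.+1 -> P j) ->
  forall j, j < m -> (j < count P (iota 0 m)) = P j.
Proof.
move=> Pdown; have Pdown_le k j : j <= k -> P k -> P j.
  elim: k j => [j | k IHk j]; first by rewrite leqn0 => /eqP->.
  by rewrite leq_eqVlt ltnS => /orP[/eqP-> | /IHk + /Pdown].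
elim: m => [//|m IHm] j; rewrite ltnS iota0S count_cat /= addn0.
case Pm: (P m).
  have -> : count P (iota 0 m) = m.
    rewrite -[RHS](size_iota 0 m) -count_predT; apply: eq_in_count => x.
    by rewrite mem_iota add0n => /ltnW xm; exact: Pdown_le Pm.
  by move=> jm; rewrite addn1 ltnS jm (Pdown_le _ _ jm Pm).
rewrite addn0 leq_eqVlt => /orP[/eqP-> | /IHm //]; rewrite Pm; apply/negbTE.
by rewrite -leqNgt; have := count_size P (iota 0 m); rewrite size_iota.
Qed.

Lemma count_ltn_iota c m : count (fun k => k < c) (iota 0 m) = minn c m.
Proof.
elim: m => [|m IHm]; first by rewrite minn0.
by rewrite iota0S count_cat IHm /=; case: (ltnP m c) => ? /=; lia.
Qed.

Lemma count_ltn_eqn (f : nat -> nat) (l : seq nat) i :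
  count (fun j => f j < i) l + count (fun j => f j == i) l = count (fun j => f j <= i) l.
Proof.
rewrite -count_predUI (@eq_count _ (predI _ _) pred0) ?count_pred0 ?addn0 => [|x /=].
  by apply: eq_count => x /=; case: ltngtP.
by case: ltngtP.
Qed.

Lemma sumn_count_eqn (f : nat -> nat) (l : seq nat) k :
  sumn [seq count (fun j => f j == i) l | i <- iota 0 k] = count (fun j => f j < k) l.
Proof.
elim: k => [|k IHk]; first by rewrite /= (@eq_count _ _ pred0) ?count_pred0.
by rewrite iota0S map_cat sumn_cat IHk /= addn0 count_ltn_eqn.
Qed.

Lemma scanl_count_eqn (f : nat -> nat) (l : seq nat) m i :
  scanl addn (count (fun j => f j < i) l) [seq count (fun j => f j == k) l | k <- iota i m]
  = [seq count (fun j => f j <= k) l | k <- iota i m].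
Proof.
by elim: m i => [//|m IHm] i /=; rewrite count_ltn_eqn -IHm.
Qed.

End SeqCount.

Section RunComposition.
Local Open Scope nat_scope.
Variables (n : nat) (s : 'I_n -> bool) (B : {set 'I_n}).
Hypothesis B_lt : forall p, p \in B -> p.+1 < n.
Hypothesis sB : changes s \subset B.

Definition inB (i : nat) : bool := i \in [seq val p | p in B].

Lemma inBE (p : 'I_n) : inB p = (p \in B).
Proof. by rewrite /inB (mem_map val_inj) mem_enum. Qed.

Definition is_cut (i : nat) : bool := (i.+1 == n) || inB i.
Definition blk_idx (j : nat) : nat := count is_cut (iota 0 j).
Definition nblk : nat := blk_idx n.
Definition blk_len (k : nat) : nat := count (fun j => blk_idx j == k) (iota 0 n).
Definition blk_end (k : nat) : nat := count (fun j => blk_idx j <= k) (iota 0 n).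
Definition blk_sgn (k : nat) : bool :=
  if [pick p : 'I_n | blk_idx p == k] is Some p then s p else false.
Definition blk_part (k : nat) : int := if blk_sgn k then - (blk_len k)%:Z else (blk_len k)%:Z.
Definition run_comp : seq int := map blk_part (iota 0 nblk).

Lemma blk_idxS j : blk_idx j.+1 = blk_idx j + is_cut j.
Proof. by rewrite /blk_idx iota0S count_cat /= addn0. Qed.

Lemma blk_idx_mono : {homo blk_idx : j j' / j <= j'}.
Proof. by move=> j j' jj'; rewrite /blk_idx -(subnKC jj') iotaD count_cat leq_addr. Qed.

Lemma blk_idx_lt j : j < n -> blk_idx j < nblk.
Proof.
move=> jn; rewrite /nblk -(prednK (leq_ltn_trans (leq0n j) jn)) blk_idxS /is_cut.
by rewrite prednK ?eqxx ?addn1 ?ltnS ?blk_idx_mono //; lia.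
Qed.

Lemma blk_idx_onto k : k < nblk -> exists2 j, j < n & blk_idx j = k.
Proof.
suff ivt m : m <= n -> k < blk_idx m -> exists2 j, j < n & blk_idx j = k by exact: ivt.
elim: m => [|m IHm] mn; first by rewrite /blk_idx.
rewrite blk_idxS; case: (ltnP k (blk_idx m)) => [km _ | mk kS]; first exact: IHm (ltnW mn) km.
by exists m => //; move: kS mk; case: (is_cut m) => /=; lia.
Qed.

Lemma blk_len_gt0 k : k < nblk -> 0 < blk_len k.
Proof.
move=> /blk_idx_onto[j jn <-]; rewrite -has_count; apply/hasP.
by exists j; rewrite ?mem_iota ?eqxx.
Qed.

Lemma blk_idx_sgn (p q : 'I_n) : blk_idx p = blk_idx q -> s p = s q.
Proof.
wlog pq : p q / p <= q.
  by move=> Hwlog E; case: (leqP p q) => [|/ltnW] pq; [exact: Hwlog | apply/esym/Hwlog].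
suff walk d (i k : 'I_n) : k = i + d :> nat -> blk_idx i = blk_idx k -> s i = s k.
  by apply: (walk (q - p)); lia.
clear pq; elim: d i k => [|d IHd] {}p {}q Eq E.
  by congr s; apply: val_inj; rewrite /= Eq addn0.
have p1n : p.+1 < n by have := ltn_ord q; lia.
pose p1 : 'I_n := Ordinal p1n.
have E1 : blk_idx p1 = blk_idx p.
  by apply/eqP; rewrite eqn_leq {1}E !blk_idx_mono //= Eq; lia.
have pB : p \notin B.
  by apply/negP => pB; move: E1; rewrite /= blk_idxS /is_cut inBE pB orbT; lia.
rewrite (changesPn (p' := p1) erefl (contra (subsetP sB p) pB)).
by apply: IHd; [rewrite /= Eq; lia | rewrite E1].
Qed.

Lemma map_abs_run_comp : map absz run_comp = map blk_len (iota 0 nblk).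
Proof.
rewrite -map_comp; apply: eq_map => k /=.
by rewrite /blk_part; case: blk_sgn; rewrite ?abszN.
Qed.

Lemma psums_run_comp : psums run_comp = map blk_end (iota 0 nblk).
Proof.
rewrite /psums map_abs_run_comp; have := scanl_count_eqn blk_idx (iota 0 n) nblk 0.
by rewrite (@eq_count _ _ pred0) ?count_pred0.
Qed.

Lemma blk_endE k j : j < n -> (j < blk_end k) = (blk_idx j <= k).
Proof. by move=> jn; rewrite count_iota_prefix // => i; apply: leq_trans; exact: blk_idx_mono. Qed.

Lemma blk_run_comp j : j < n -> blk run_comp j = blk_idx j.
Proof.
move=> jn; rewrite /blk psums_run_comp count_map.
rewrite (@eq_count _ _ (fun k => k < blk_idx j)) ?count_ltn_iota => [|k /=].
  by apply/minn_idPl/ltnW/blk_idx_lt.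
by rewrite leqNgt blk_endE // -ltnNge.
Qed.

Lemma comp_signs_run_comp : comp_signs n run_comp =1 s.
Proof.
move=> p; rewrite ffunE blk_run_comp // /run_comp (nth_map 0) ?size_iota ?blk_idx_lt //.
rewrite nth_iota ?blk_idx_lt // /blk_part; have := blk_len_gt0 (blk_idx_lt (ltn_ord p)).
have -> : blk_sgn (blk_idx p) = s p.
  by rewrite /blk_sgn; case: pickP => [q /eqP/blk_idx_sgn // | /(_ p)]; rewrite eqxx.
by case: (s p) => /= pos; rewrite ?oppr_gt0 ?ltz_nat ?pos // ltNge lez_nat ltnW.
Qed.

Lemma comp_cuts_run_comp : comp_cuts n run_comp = B.
Proof.
apply/setP => p; rewrite inE psums_run_comp; apply/idP/idP => [/andP[pn /mapP[k]] | pB].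
  rewrite mem_iota => /andP[_ kn] Ek.
  have : blk_idx p <= k by rewrite -blk_endE // -Ek.
  have : ~~ (blk_idx p.+1 <= k) by rewrite -blk_endE // -Ek ltnn.
  by rewrite blk_idxS /is_cut (ltn_eqF pn) inBE; case: (p \in B) => //=; rewrite addn0 => /negP.
rewrite B_lt //=; apply/mapP; exists (blk_idx p); first by rewrite mem_iota blk_idx_lt.
apply/eqP; rewrite eqn_leq blk_endE // leqnn /= leqNgt blk_endE ?B_lt //.
by rewrite blk_idxS /is_cut inBE pB orbT addn1 ltnn.
Qed.

Lemma scomp_run_comp : is_scomp n run_comp.
Proof.
apply/andP; split.
  apply/allP => a /mapP[k]; rewrite mem_iota => /andP[_ kn] ->.
  by rewrite -absz_eq0 /blk_part; case: blk_sgn; rewrite ?abszN -lt0n blk_len_gt0.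
rewrite map_abs_run_comp sumn_count_eqn (@eq_in_count _ _ predT) ?count_predT ?size_iota //.
by move=> j; rewrite mem_iota => /andP[_ jn]; exact: blk_idx_lt.
Qed.

End RunComposition.

Section OmegaClasses.
Variable n : nat.

Lemma Omega_run_class (w0 : Bn n) : Omega n (run_class (signs w0) (run_cuts w0)).
Proof.
have B_lt p : p \in run_cuts w0 -> (p.+1 < n)%N by rewrite inE => /andP[].
have sB : changes (signs w0) \subset run_cuts w0 by rewrite run_cutsE subsetUl.
apply: inspan_gen; exists (run_comp (signs w0) (run_cuts w0)); split; first exact: scomp_run_comp.
rewrite Talpha_run_class comp_cuts_run_comp //; congr run_class.
by apply/ffunP => p; rewrite comp_signs_run_comp.
Qed.

Lemma Omega_invariant (x : QB n) :
  (forall w1 w2, signs w1 = signs w2 -> run_cuts w1 = run_cuts w2 -> x w1 = x w2) -> Omega n x.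
Proof.
move=> inv; apply: (inspan_fibers (f := fun w => (signs w, run_cuts w))) => [w0 | w1 w2 [/inv]//].
by under eq_bigl do rewrite xpair_eqE; exact: Omega_run_class.
Qed.

Lemma Omega_desc_sum_pos (C : {set 'I_n}) : Omega n (desc_sum [ffun=> false] C).
Proof.
apply: Omega_invariant => w1 w2 E1 E2; rewrite !desc_sumE E1.
have [pos | //] := eqVneq (signs w2) [ffun=> false].
have no_change : changes (signs w2) = set0.
  by apply/setP => p; rewrite pos !inE; apply/existsP => -[p' /andP[_]]; rewrite !ffunE.
by move: E2; rewrite !run_cutsE E1 no_change !set0U => ->.
Qed.

End OmegaClasses.

Section Corollary.
Variable n : nat.
Local Notation N := n.+1.
Implicit Types (w : Bn N) (J : {set 'I_N}).

Lemma mem_Des_signs_cuts w (q q' : 'I_N) : q' = q.+1 :> nat ->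
  (q' \in Des w) = if negv w q == negv w q' then (q \in run_cuts w) != negv w q else negv w q'.
Proof.
move=> Eq'; rewrite (mem_Des _ Eq') run_cutsE in_setU (mem_changes _ Eq') (mem_perm_des _ Eq').
rewrite !ffunE !wvalE -!abspermE.
case: (negv w q); case: (negv w q') => /=; rewrite ?ltrN2 ?ltz_nat ?ltnS //.
- by case: ltngtP => // /ord_inj/perm_inj E; move: Eq'; rewrite E; lia.
- by case: (_ < _)%N.
Qed.

Lemma Des0_signs_cuts w1 w2 : signs w1 = signs w2 -> run_cuts w1 = run_cuts w2 ->
  Des w1 :\ ord0 = Des w2 :\ ord0.
Proof.
move=> E1 E2; have negvE p : negv w1 p = negv w2 p by move/ffunP/(_ p): E1; rewrite !ffunE.
apply/setP => i; rewrite !in_setD1; have [// | /ord_predP[q Eq]] := eqVneq i ord0.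
by rewrite !(mem_Des_signs_cuts _ Eq) !negvE E2.
Qed.

Lemma I0_sub_Omega x : I0 n x -> Omega N x.
Proof.
move/I0_invariantP => inv; apply: Omega_invariant => w1 w2 E1 E2.
by apply: inv; exact: Des0_signs_cuts.
Qed.

Lemma I0_qbmul_XJ_run_class J (t : {ffun 'I_N -> bool}) (B : {set 'I_N}) :
  ord0 \in J -> I0 n (qbmul (XJ J) (run_class t B)).
Proof.
move=> J0; case: (pickP (fun w => (signs w == t) && (run_cuts w == B))) => [w0 | empty].
  case/andP=> /eqP<- /eqP<-.
  rewrite run_class_decomp ?qbmul_sumr => [|]; last by rewrite run_cutsE subsetUl.
  apply: inspan_sum => S; rewrite qbmulZr !subsetD => /andP[_ disjS].
  by apply/inspanZ/I0_qbmul_XJ_desc_sum; rewrite // subsetD disjoint_sym disjS run_cutsE subsetUl.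
by rewrite /run_class big_pred0 // qbmul0r; exact: inspan0.
Qed.

Lemma I0_qbmul_Omega x y : I0 n x -> Omega N y -> I0 n (qbmul x y).
Proof.
apply: inspan_qbmul => _ _ [J [J0 ->]] [al [_ ->]].
by rewrite Talpha_run_class; exact: I0_qbmul_XJ_run_class.
Qed.

Definition succ_in J : {set 'I_N} :=
  [set p : 'I_N | [exists k : 'I_N, (k == p.+1 :> nat) && (k \in J)]].

Lemma mem_succ_in J (p p' : 'I_N) : p' = p.+1 :> nat -> (p \in succ_in J) = (p' \in J).
Proof. by move=> Ep'; rewrite inE (exists_succ (mem J) Ep'). Qed.

Lemma segJ_ord0 (q : 'I_N) : segJ [set ord0] q = 0%N.
Proof. by apply/eqP; rewrite cards_eq0; apply/eqP/setP => i; rewrite !inE; case: eqP => // ->. Qed.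

Lemma XJ_factor J : ord0 \in J ->
  XJ J = qbmul (XJ [set ord0]) (desc_sum [ffun=> false] (succ_in J)).
Proof.
move=> J0; apply/ffunP => w; rewrite XJE qbmul_XJ_desc_sum ?set11 //.
rewrite (card_shuffles_flat _ (segJ_mono _) (@twist_inj _ _ w)) => [|q r].
  2: by rewrite !segJ_ord0.
congr (nat_of_bool _)%:R; apply/(Des_subsetP _ J0)/forallP => [asc p | asc q q' Eq' q'J].
  apply/forallP => p'; apply/implyP => /andP[/eqP Ep' pJ].
  by rewrite /twist !ffunE; apply: asc; rewrite // -(mem_succ_in _ Ep').
move/forallP/(_ q')/implyP: (asc q); rewrite /twist !ffunE; apply.
by rewrite Eq' eqxx (mem_succ_in _ Eq').
Qed.

Lemma I0_eq_X0_Omega x : I0 n x <-> exists y, Omega N y /\ x = qbmul (XJ [set ord0]) y.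
Proof.
split=> [|[y [Oy ->]]]; last by apply: I0_qbmul_Omega Oy; apply: I0_XJ; rewrite set11.
move: x; apply: inspan_ind => [| x1 x2 [y1 [O1 ->]] [y2 [O2 ->]] | c x [y [Oy ->]] | _ [J [J0 ->]]].
- by exists 0; split; [exact: inspan0 | rewrite qbmul0r].
- by exists (y1 + y2); split; [exact: inspanD | rewrite qbmulDr].
- by exists (qbscale c y); split; [exact: inspanZ | rewrite qbmulZr].
exists (desc_sum [ffun=> false] (succ_in J)).
by split; [exact: Omega_desc_sum_pos | exact: XJ_factor].
Qed.

End Corollary.

Theorem corollary7p7 (n : nat) :
  (* I_{n+1}^0 is a right ideal of Omega(B_{n+1}) *)
  (forall x, I0 n x -> Omega n.+1 x) /\
  (forall x y, I0 n x -> Omega n.+1 y -> I0 n (qbmul x y)) /\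
  (* and it equals X_{{0}} . Omega(B_{n+1}) *)
  (forall x, I0 n x <-> exists y, Omega n.+1 y /\ x = qbmul (XJ [set ord0]) y).
Proof.
split; first exact: I0_sub_Omega.
split; first exact: I0_qbmul_Omega.
exact: I0_eq_X0_Omega.
Qed.
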